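(* Let $C>0$ and $\epsilon\in(0,1)$. The following inclusions hold as germs at $\infty$ (i.e. each holds after removing from the left-hand set all points of modulus at most some $R>0$): (1) for $D>0$, $\epsilon'\in(\epsilon,1)$ and $\delta>0$, we have $T(U_D^{\epsilon'},\delta)\subseteq U_C^\epsilon$; (2) for $D>C$ and $\delta>0$, we have $T(U_D^\epsilon,\delta)\subseteq U_C^\epsilon$; (3) for $\nu>0$, we have $\nu\cdot U_C^\epsilon\subseteq U_{\nu C}^\epsilon$ if $\nu\le1$, and $\nu\cdot U_C^\epsilon\subseteq U_C^\epsilon$ if $\nu\ge1$; (4) $U_C^\epsilon+U_C^\epsilon\subseteq U_{C/2}^\epsilon$; (5) for any standard power domain $U$, there exists $a>0$ such that $\log\left(U_C^\epsilon\right)\cap H(a)\subseteq U\cap H(a)$.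
   Context: For $a\in\mathbb{R}$, $H(a):=\{z\in\mathbb{C}:\operatorname{Re}z>a\}$. For $C>0$ and $\epsilon\in(0,1)$, let $\phi_C^\epsilon:H(0)\to\mathbb{C}$, $\phi_C^\epsilon(z)=z+C(1+z)^\epsilon$ (principal branch of the power), and let the standard power domain be $U_C^\epsilon:=\phi_C^\epsilon(H(0))$; a standard power domain is any set of this form. For $A\subseteq\mathbb{C}$ and $\delta>0$, $T(A,\delta):=\{z\in\mathbb{C}:d(z,A)<\delta\}$. In (3), $\nu\cdot U=\{\nu z:z\in U\}$; in (4), $U+U$ is the Minkowski sum; in (5), $\log$ is the principal branch of the logarithm on $\mathbb{C}\setminus(-\infty,0]$. *)

From Stdlib Require Import Reals.
From Coquelicot Require Export Coquelicot.
Open Scope R_scope.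

Definition Re (z : C) : R := fst z.
Definition Im (z : C) : R := snd z.

Definition H (a : R) (z : C) : Prop := Re z > a.

(* Principal argument, with values in (-PI, PI]  (Arg 0 := 0). *)
Definition Arg (z : C) : R :=
  let x := Re z in let y := Im z in
  match Rlt_dec 0 x with
  | left _ => atan (y / x)
  | right _ =>
    match Rlt_dec x 0 with
    | left _ => match Rle_dec 0 y with
                | left _ => atan (y / x) + PI
                | right _ => atan (y / x) - PI
                end
    | right _ =>
      match Rlt_dec 0 y with
      | left _ => PI / 2
      | right _ => match Rlt_dec y 0 with
                   | left _ => - (PI / 2)
                   | right _ => 0
                   end
      end
    end
  end.

(* Principal logarithm log z = ln|z| + i Arg z (meaningful on C \ (-oo,0]). *)
Definition Clog (z : C) : C := (ln (Cmod z), Arg z).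

(* Principal power w^e = exp(e log w) = |w|^e (cos(e Arg w) + i sin(e Arg w)),
   for w <> 0 and real exponent e. *)
Definition Cpow (w : C) (e : R) : C :=
  (Rpower (Cmod w) e * cos (e * Arg w), Rpower (Cmod w) e * sin (e * Arg w)).

Definition phi (c eps : R) (z : C) : C :=
  Cplus z (Cmult (RtoC c) (Cpow (Cplus (RtoC 1) z) eps)).

Definition U (c eps : R) (w : C) : Prop :=
  exists z : C, H 0 z /\ w = phi c eps z.

Definition standard_power_domain (A : C -> Prop) : Prop :=
  exists c eps : R, 0 < c /\ 0 < eps < 1 /\ forall w, A w <-> U c eps w.

(* T(A, delta) = { z : d(z, A) < delta } = { z : exists a in A, |z - a| < delta } *)
Definition T (A : C -> Prop) (delta : R) (z : C) : Prop :=
  exists a : C, A a /\ Cmod (Cminus z a) < delta.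

Definition germ_incl (A B : C -> Prop) : Prop :=
  exists R0 : R, R0 > 0 /\ forall z, A z -> Cmod z > R0 -> B z.

Definition scale (nu : R) (A : C -> Prop) (w : C) : Prop :=
  exists z, A z /\ w = Cmult (RtoC nu) z.

Definition msum (A B : C -> Prop) (w : C) : Prop :=
  exists u v, A u /\ B v /\ w = Cplus u v.

Definition log_image (A : C -> Prop) (w : C) : Prop :=
  exists z, A z /\ w = Clog z.

Definition inter (A B : C -> Prop) (z : C) : Prop := A z /\ B z.

From Pilot Require Import Defs.
From Stdlib Require Import Reals Lra Lia.
From Coquelicot Require Import Coquelicot.
Open Scope R_scope.

(* Far from the origin, U_C^e contains every w with Re w >= a |w|^e for a constant
   a > C cos(e pi/2), and every point of U_C^e satisfies such a bound, up to an additive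
   constant, for each a < C cos(e pi/2). The second fact is read off from
   phi(z) = z + C (1+z)^e: with r = |1+z|, Re phi(z) >= C cos(e pi/2) r^e and |phi(z)| = O(r).
   For the first, u + C u^e = 1 + w is solved by iterating u |-> 1 + w - C u^e on a disc of
   radius ~|w|^e around 1 + w - C (1+w)^e: at distance ~|w| from 0 the map u |-> u^e is
   O(|w|^(e-1))-Lipschitz, and Re (w^e) <= cos(e pi/2) |w|^e + O(|w|^e Re w / |w|) keeps the
   disc inside Re u > 1.
   Each inclusion then holds because the left-hand set obeys such a power bound with a
   constant strictly above the threshold of the right-hand domain: neighbourhoods, sums,
   dilations and the logarithm only perturb Re w and |w| by amounts absorbed by the gap
   between the constants, or between the exponents. *)

(** * Real powers *)

Lemma Rpower_pos x p : 0 < Rpower x p.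
Proof. apply exp_pos. Qed.

Lemma Rpower_ge_1 x p : 1 <= x -> 0 <= p -> 1 <= Rpower x p.
Proof. intros. rewrite <- (Rpower_O x) by lra. apply Rle_Rpower; lra. Qed.

Lemma Rpower_base_1 p : Rpower 1 p = 1.
Proof. unfold Rpower. now rewrite ln_1, Rmult_0_r, exp_0. Qed.

Lemma Rpower_le_self x p : 1 <= x -> p <= 1 -> Rpower x p <= x.
Proof. intros. rewrite <- (Rpower_1 x) at 2 by lra. apply Rle_Rpower; lra. Qed.

Lemma Rpower_Rpower_inv x p : 0 < x -> 0 < p -> Rpower (Rpower x (/ p)) p = x.
Proof. intros. rewrite Rpower_mult, Rinv_l, Rpower_1; lra. Qed.

Lemma Rpower_div_self_le m x p : 0 < m <= x -> p <= 1 -> Rpower x p / x <= Rpower m p / m.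
Proof.
  intros [Hm Hmx] Hp.
  assert (Hx : Rpower x p = Rpower m p * Rpower (x / m) p).
  { rewrite Rpower_mult_distr by (try apply Rdiv_lt_0_compat; lra). f_equal. field. lra. }
  assert (Hq : Rpower (x / m) p <= x / m).
  { apply Rpower_le_self; [|lra]. apply Rcomplements.Rle_div_r; lra. }
  pose proof (Rpower_pos m p).
  rewrite Hx. apply Rcomplements.Rle_div_l; [lra|].
  replace (Rpower m p / m * x) with (Rpower m p * (x / m)) by (field; lra).
  apply Rmult_le_compat_l; lra.
Qed.

Lemma Rpower_subadditive x y p : 0 < x -> 0 < y -> p <= 1 ->
  Rpower (x + y) p <= Rpower x p + Rpower y p.
Proof.
  intros Hx Hy Hp.
  pose proof (Rpower_div_self_le x (x + y) p ltac:(lra) Hp) as Hxr.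
  pose proof (Rpower_div_self_le y (x + y) p ltac:(lra) Hp) as Hyr.
  set (r := Rpower (x + y) p / (x + y)) in *.
  replace (Rpower (x + y) p) with (x * r + y * r) by (unfold r; field; lra).
  apply Rplus_le_compat.
  - replace (Rpower x p) with (x * (Rpower x p / x)) by (field; lra).
    apply Rmult_le_compat_l; lra.
  - replace (Rpower y p) with (y * (Rpower y p / y)) by (field; lra).
    apply Rmult_le_compat_l; lra.
Qed.

Lemma Rpower_le_linear_add a g p : 0 < a -> 0 <= p < 1 ->
  exists K, forall s, 0 < s -> g * Rpower s p <= a * s + K.
Proof.
  intros Ha Hp.
  pose proof (Rabs_pos g).
  assert (Hga : 0 <= Rabs g / a) by (apply Rdiv_le_0_compat; lra).
  set (S := Rpower (Rabs g / a + 1) (/ (1 - p))).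
  assert (HgS : Rabs g / a <= Rpower S (1 - p)) by (unfold S; rewrite Rpower_Rpower_inv; lra).
  exists (Rabs g * Rpower S p). intros s Hs.
  pose proof (Rpower_pos s p).
  apply Rle_trans with (Rabs g * Rpower s p).
  { apply Rmult_le_compat_r; [lra | apply Rle_abs]. }
  destruct (Rle_lt_dec S s) as [HSs | HsS].
  - assert (Hs_split : s = Rpower s p * Rpower s (1 - p)).
    { rewrite <- Rpower_plus. replace (p + (1 - p)) with 1 by ring. now rewrite Rpower_1. }
    assert (Rabs g <= a * Rpower s (1 - p)).
    { apply Rcomplements.Rle_div_l in HgS; [|lra].
      apply Rle_trans with (Rpower S (1 - p) * a); [lra|].
      rewrite Rmult_comm. apply Rmult_le_compat_l; [lra|].
      apply Rle_Rpower_l; [lra|]. split; [apply Rpower_pos | lra]. }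
    pose proof (Rpower_pos S p).
    rewrite Hs_split at 2. nra.
  - assert (Rpower s p <= Rpower S p) by (apply Rle_Rpower_l; lra).
    pose proof (Rpower_pos S p). nra.
Qed.

Lemma Rpower_le_linear_eventually a g p : 0 < a -> 0 <= p < 1 ->
  Rbar_locally p_infty (fun s => g * Rpower s p <= a * s).
Proof.
  intros Ha Hp.
  destruct (Rpower_le_linear_add (a / 2) g p ltac:(lra) Hp) as [K HK].
  exists (Rmax 0 (2 * K / a)). intros s Hs.
  pose proof (Rmax_l 0 (2 * K / a)) as Hs0. pose proof (Rmax_r 0 (2 * K / a)) as HsK.
  specialize (HK s ltac:(lra)).
  apply Rcomplements.Rle_div_l in HsK; [nra | lra].
Qed.

Lemma Rpower_ge_eventually K p : 0 < p -> Rbar_locally p_infty (fun s => K <= Rpower s p).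
Proof.
  intros Hp. exists (Rpower (Rabs K + 1) (/ p)). intros s Hs.
  pose proof (Rabs_pos K). pose proof (Rle_abs K).
  apply Rle_trans with (Rpower (Rpower (Rabs K + 1) (/ p)) p).
  - rewrite Rpower_Rpower_inv; lra.
  - apply Rle_Rpower_l; [lra|]. split; [apply Rpower_pos | lra].
Qed.

Lemma filterlim_Rpower_p_infty q : 0 < q ->
  filterlim (fun s => Rpower s q) (Rbar_locally p_infty) (Rbar_locally p_infty).
Proof.
  intros Hq P [M HM]. unfold filtermap.
  apply (filter_imp (fun s => M + 1 <= Rpower s q)); [intros s Hs; apply HM; lra|].
  now apply Rpower_ge_eventually.
Qed.

Lemma Rpower_le_Rpower_eventually a g p q : 0 < a -> 0 <= p < q ->
  Rbar_locally p_infty (fun s => g * Rpower s p <= a * Rpower s q).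
Proof.
  intros Ha Hpq.
  assert (Hpq' : 0 <= p / q < 1).
  { split; [apply Rdiv_le_0_compat; lra|]. apply Rcomplements.Rlt_div_l; lra. }
  apply (filter_imp (fun s => g * Rpower (Rpower s q) (p / q) <= a * Rpower s q)).
  { intros s. rewrite Rpower_mult. replace (q * (p / q)) with p by (field; lra). auto. }
  apply (filterlim_Rpower_p_infty q ltac:(lra) (fun s => g * Rpower s (p / q) <= a * s)).
  now apply Rpower_le_linear_eventually.
Qed.

(** * Trigonometric estimates *)

Lemma sin_ge_third a : 0 <= a <= PI / 2 -> a / 3 <= sin a.
Proof.
  intros Ha. pose proof PI_4.
  destruct (sin_bound a 0 ltac:(lra) ltac:(lra)) as [Hl _].
  eapply Rle_trans; [|apply Hl]. unfold sin_approx, sin_term. simpl. nra.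
Qed.

Lemma cos_lipschitz x y : Rabs (cos x - cos y) <= Rabs (x - y).
Proof.
  destruct (MVT_gen cos y x (fun t => - sin t)) as [c [_ ->]].
  - intros t _. auto_derive; auto. ring.
  - intros t _. apply continuity_cos.
  - rewrite Rabs_mult, Rabs_Ropp. pose proof (Rabs_pos (x - y)).
    assert (Rabs (sin c) <= 1) by (apply Rabs_le, SIN_bound). nra.
Qed.

Lemma cos_Rabs x : cos (Rabs x) = cos x.
Proof. unfold Rabs. destruct (Rcase_abs x); [apply cos_neg | reflexivity]. Qed.

Lemma cos_scale_ge e th : 0 < e < 1 -> Rabs th <= PI / 2 -> cos (e * PI / 2) <= cos (e * th).
Proof.
  intros He Hth. pose proof PI_RGT_0. pose proof (Rabs_pos th).
  rewrite <- (cos_Rabs (e * th)), Rabs_mult, (Rabs_pos_eq e) by lra.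
  apply cos_decr_1; nra.
Qed.

(* cos is 1-Lipschitz and pi/2 - |th| <= 3 sin (pi/2 - |th|) = 3 cos th. *)
Lemma cos_scale_le e th : 0 < e < 1 -> Rabs th <= PI / 2 ->
  cos (e * th) <= cos (e * PI / 2) + 3 * e * cos th.
Proof.
  intros He Hth. pose proof (Rabs_pos th).
  set (phi0 := PI / 2 - Rabs th).
  assert (Hsin : sin phi0 = cos th) by (unfold phi0; rewrite sin_shift; apply cos_Rabs).
  pose proof (sin_ge_third phi0 ltac:(unfold phi0; lra)).
  pose proof (cos_lipschitz (e * Rabs th) (e * PI / 2)) as Hlip.
  replace (e * Rabs th - e * PI / 2) with (- (e * phi0)) in Hlip by (unfold phi0; field).
  rewrite Rabs_Ropp, (Rabs_pos_eq (e * phi0)) in Hlip by (apply Rmult_le_pos; unfold phi0; lra).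
  rewrite <- (cos_Rabs (e * th)), Rabs_mult, (Rabs_pos_eq e) by lra.
  pose proof (Rle_abs (cos (e * Rabs th) - cos (e * PI / 2))). nra.
Qed.

Lemma cos_scale_half_PI_pos e : 0 < e < 1 -> 0 < cos (e * PI / 2).
Proof. intros. pose proof PI_RGT_0. apply cos_gt_0; nra. Qed.

(** * Complex powers *)

Lemma Rabs_Im_le_Cmod z : Rabs (Im z) <= Cmod z.
Proof.
  pose proof (Rmax_Cmod z). pose proof (Rmax_r (Rabs (fst z)) (Rabs (snd z))). unfold Im. lra.
Qed.

Lemma Cmod_le_Rabs_Re_Im z : Cmod z <= Rabs (Re z) + Rabs (Im z).
Proof.
  destruct z as [a b]; unfold Cmod, Re, Im; cbn [fst snd].
  pose proof (Rabs_pos a); pose proof (Rabs_pos b).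
  rewrite <- (sqrt_pow2 (Rabs a + Rabs b)) by lra.
  apply sqrt_le_1_alt. rewrite <- (pow2_abs a), <- (pow2_abs b). nra.
Qed.

Lemma Re_le_Cmod z : Re z <= Cmod z.
Proof. pose proof (re_le_Cmod z). pose proof (Rle_abs (Re z)). lra. Qed.

Lemma Re_ge_sub_Cmod (w a : C) : Re a - Cmod (w - a) <= Re w.
Proof.
  pose proof (re_le_Cmod (w - a)). pose proof (Rle_abs (- Re (w - a))).
  rewrite Rabs_Ropp in *. unfold Re in *. simpl in *. lra.
Qed.

Lemma Cmod_le_add_Cmod_sub (w a : C) : Cmod w <= Cmod a + Cmod (w - a).
Proof. replace w with (a + (w - a))%C at 1 by ring. apply Cmod_triangle. Qed.

Lemma Cmod_scal_pos x z : 0 <= x -> Cmod (RtoC x * z) = x * Cmod z.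
Proof. intros. rewrite Cmod_mult, Cmod_R, Rabs_pos_eq; auto. Qed.

Lemma Arg_right u : 0 < Re u -> Arg u = atan (Im u / Re u).
Proof. intros. unfold Arg, Defs.Re, Defs.Im. now destruct (Rlt_dec 0 (fst u)). Qed.

Lemma Rabs_atan_le x : Rabs (atan x) <= PI / 2.
Proof. pose proof (atan_bound x). apply Rabs_le. lra. Qed.

Lemma Cmod_Cpow u e : Cmod (Defs.Cpow u e) = Rpower (Cmod u) e.
Proof.
  unfold Defs.Cpow, Cmod at 1. simpl.
  set (P := Rpower (Cmod u) e). set (t := e * Arg u).
  pose proof (sin2_cos2 t). unfold Rsqr in *.
  replace (P * cos t * (P * cos t * 1) + P * sin t * (P * sin t * 1)) with (P ^ 2) by nra.
  apply sqrt_pow2. left; apply Rpower_pos.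
Qed.

Lemma cos_atan_div x y : 0 < x -> cos (atan (y / x)) = x / Cmod (x, y).
Proof.
  intros Hx. rewrite cos_atan. unfold Cmod. simpl.
  assert (E : x * (x * 1) + y * (y * 1) = x ^ 2 * (1 + (y / x)²)) by (unfold Rsqr; field; lra).
  rewrite E, sqrt_mult_alt, sqrt_pow2 by (try apply pow2_ge_0; lra).
  assert (0 < sqrt (1 + (y / x)²)) by (apply sqrt_lt_R0; pose proof (Rle_0_sqr (y / x)); lra).
  field. lra.
Qed.

Lemma Re_Cpow_ge u e : 0 < e < 1 -> 0 < Re u ->
  cos (e * PI / 2) * Rpower (Cmod u) e <= Re (Defs.Cpow u e).
Proof.
  intros He Hu. unfold Defs.Cpow. simpl. rewrite Arg_right by auto.
  pose proof (cos_scale_ge e _ He (Rabs_atan_le (Im u / Re u))).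
  pose proof (Rpower_pos (Cmod u) e). nra.
Qed.

Lemma Re_Cpow_le u e : 0 < e < 1 -> 0 < Re u ->
  Re (Defs.Cpow u e) <=
    cos (e * PI / 2) * Rpower (Cmod u) e + 3 * e * Rpower (Cmod u) e * (Re u / Cmod u).
Proof.
  intros He Hu. unfold Defs.Cpow. simpl. rewrite Arg_right by auto.
  pose proof (cos_scale_le e _ He (Rabs_atan_le (Im u / Re u))) as Hc.
  destruct u as [x y]. rewrite cos_atan_div in Hc by auto.
  pose proof (Rpower_pos (Cmod (x, y)) e). simpl in *. nra.
Qed.

(* [|u|^e sin (b + e arg u)] along a segment: the phase b = pi/2 gives the real part of
   [u^e], and b = 0 its imaginary part. *)
Section SegmentDerivative.
Variables (e b a1 a2 h1 h2 : R).
Let X t := a1 + t * h1.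
Let Y t := a2 + t * h2.

Lemma is_derive_Cpow_component t : 0 < X t ->
  is_derive (fun t => Rpower (Cmod (X t, Y t)) e * sin (b + e * atan (Y t / X t))) t
    (e * Rpower (Cmod (X t, Y t)) e / (X t ^ 2 + Y t ^ 2) *
      ((X t * h1 + Y t * h2) * sin (b + e * atan (Y t / X t))
       + (X t * h2 - Y t * h1) * cos (b + e * atan (Y t / X t)))).
Proof.
  unfold X, Y, Rpower, Cmod; cbn [fst snd]. intros Hx.
  set (r2 := (a1 + t * h1) ^ 2 + (a2 + t * h2) ^ 2).
  assert (Hr : 0 < r2) by (unfold r2; pose proof (pow2_ge_0 (a2 + t * h2)); nra).
  pose proof (sqrt_lt_R0 _ Hr) as Hs.
  pose proof (sqrt_sqrt r2 (Rlt_le _ _ Hr)) as Hss.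
  auto_derive;
    replace ((a1 + t * h1) * ((a1 + t * h1) * 1) + (a2 + t * h2) * ((a2 + t * h2) * 1))
      with r2 by (unfold r2; ring).
  - repeat split; lra.
  - unfold Rdiv. set (x := a1 + t * h1) in *. set (y := a2 + t * h2) in *.
    set (Sq := sqrt r2) in *. set (P := exp _). clearbody Sq P.
    replace (/ (1 + y * / x * (y * / x * 1))) with (x ^ 2 * / (Sq * Sq))
      by (rewrite Hss; unfold r2; field; split; nra).
    rewrite <- Hss. field. lra.
Qed.
End SegmentDerivative.

Lemma rotation_bound A B c s : c ^ 2 + s ^ 2 = 1 -> Rabs (A * s + B * c) <= sqrt (A ^ 2 + B ^ 2).
Proof.
  intros Hcs. rewrite <- sqrt_Rsqr_abs. apply sqrt_le_1_alt. unfold Rsqr.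
  pose proof (pow2_ge_0 (A * c - B * s)).
  replace (A ^ 2 + B ^ 2) with ((A ^ 2 + B ^ 2) * (c ^ 2 + s ^ 2)) by (rewrite Hcs; ring).
  nra.
Qed.

Lemma Cpow_component_derive_bound e m x y h1 h2 phi0 : 0 < e < 1 -> 0 < m <= Cmod (x, y) ->
  Rabs (e * Rpower (Cmod (x, y)) e / (x ^ 2 + y ^ 2) *
        ((x * h1 + y * h2) * sin phi0 + (x * h2 - y * h1) * cos phi0))
  <= e * (Rpower m e / m) * Cmod (h1, h2).
Proof.
  intros He Hm.
  set (N := Cmod (x, y)) in *.
  assert (HN2 : N * N = x ^ 2 + y ^ 2) by (apply sqrt_sqrt; nra).
  assert (Hrot : Rabs ((x * h1 + y * h2) * sin phi0 + (x * h2 - y * h1) * cos phi0)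
                 <= N * Cmod (h1, h2)).
  { unfold N, Cmod. cbn [fst snd]. rewrite <- sqrt_mult_alt by nra.
    replace ((x ^ 2 + y ^ 2) * (h1 ^ 2 + h2 ^ 2))
      with ((x * h1 + y * h2) ^ 2 + (x * h2 - y * h1) ^ 2) by ring.
    apply rotation_bound. pose proof (sin2_cos2 phi0). unfold Rsqr in *. nra. }
  pose proof (Rpower_div_self_le m N e Hm ltac:(lra)).
  pose proof (Rpower_pos N e). pose proof (Cmod_ge_0 (h1, h2)).
  assert (Hfactor : 0 <= e * Rpower N e / (N * N))
    by (apply Rmult_le_pos; [nra | left; apply Rinv_0_lt_compat; nra]).
  rewrite Rabs_mult, <- HN2, Rabs_pos_eq by exact Hfactor.
  apply Rle_trans with (e * Rpower N e / (N * N) * (N * Cmod (h1, h2))).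
  { apply Rmult_le_compat_l; lra. }
  replace (e * Rpower N e / (N * N) * (N * Cmod (h1, h2)))
    with (e * (Rpower N e / N) * Cmod (h1, h2)) by (field; lra).
  apply Rmult_le_compat_r; [lra|]. apply Rmult_le_compat_l; lra.
Qed.

Lemma Rabs_sub_le_of_derive_bound (f df : R -> R) B :
  (forall t, 0 <= t <= 1 -> is_derive f t (df t)) ->
  (forall t, 0 <= t <= 1 -> Rabs (df t) <= B) ->
  Rabs (f 1 - f 0) <= B.
Proof.
  intros Hd Hb.
  destruct (MVT_gen f 0 1 df) as [c [Hc ->]];
    rewrite ?Rmin_left, ?Rmax_right in * by lra.
  - intros t Ht. apply Hd; lra.
  - intros t Ht. apply derivable_continuous_pt. exists (df t). apply is_derive_Reals, Hd; lra.
  - rewrite Rminus_0_r, Rmult_1_r. apply Hb; lra.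
Qed.

Lemma Cpow_component_lipschitz e m b (u v : C) : 0 < e < 1 -> 0 < m ->
  (forall t, 0 <= t <= 1 -> 0 < Re u + t * (Re v - Re u) /\
      m <= Cmod (Re u + t * (Re v - Re u), Im u + t * (Im v - Im u))) ->
  Rabs (Rpower (Cmod v) e * sin (b + e * Arg v) - Rpower (Cmod u) e * sin (b + e * Arg u))
  <= e * (Rpower m e / m) * Cmod (v - u).
Proof.
  intros He Hm Hseg.
  destruct (Hseg 0 ltac:(lra)) as [Hu _]. destruct (Hseg 1 ltac:(lra)) as [Hv _].
  rewrite (Arg_right u), (Arg_right v) by lra.
  destruct u as [a1 a2], v as [b1 b2]. unfold Re, Im in *. cbn [fst snd] in *.
  set (f := fun t => Rpower (Cmod (a1 + t * (b1 - a1), a2 + t * (b2 - a2))) e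
                     * sin (b + e * atan ((a2 + t * (b2 - a2)) / (a1 + t * (b1 - a1))))).
  replace (Rpower (Cmod (b1, b2)) e * sin (b + e * atan (b2 / b1))
           - Rpower (Cmod (a1, a2)) e * sin (b + e * atan (a2 / a1))) with (f 1 - f 0)
    by (unfold f; repeat f_equal; ring).
  replace (Cmod ((b1, b2) - (a1, a2))%C) with (Cmod (b1 - a1, b2 - a2)) by reflexivity.
  eapply Rabs_sub_le_of_derive_bound.
  - intros t Ht. apply is_derive_Cpow_component. apply Hseg; auto.
  - intros t Ht. apply Cpow_component_derive_bound; [auto|].
    destruct (Hseg t Ht); split; lra.
Qed.

Lemma Cpow_lipschitz e m (u v : C) : 0 < e < 1 -> 0 < m ->
  (forall t, 0 <= t <= 1 -> 0 < Re u + t * (Re v - Re u) /\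
      m <= Cmod (Re u + t * (Re v - Re u), Im u + t * (Im v - Im u))) ->
  Cmod (Defs.Cpow v e - Defs.Cpow u e) <= 2 * e * (Rpower m e / m) * Cmod (v - u).
Proof.
  intros He Hm Hseg.
  pose proof (Cpow_component_lipschitz e m (PI / 2) u v He Hm Hseg) as HRe.
  pose proof (Cpow_component_lipschitz e m 0 u v He Hm Hseg) as HIm.
  rewrite <- !cos_sin in HRe. rewrite !Rplus_0_l in HIm.
  eapply Rle_trans; [apply Cmod_le_Rabs_Re_Im|].
  unfold Defs.Cpow, Re, Im. simpl. unfold Rminus in *. lra.
Qed.

Lemma segment_in_half_ball (W u v : C) :
  Cmod (u - W) <= Cmod W / 2 -> Cmod (v - W) <= Cmod W / 2 -> 0 < Re u -> 0 < Re v ->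
  forall t, 0 <= t <= 1 -> 0 < Re u + t * (Re v - Re u) /\
    Cmod W / 2 <= Cmod (Re u + t * (Re v - Re u), Im u + t * (Im v - Im u)).
Proof.
  intros Hu Hv Hu0 Hv0 t Ht. split; [nra|].
  set (s := (RtoC (1 - t) * (u - W) + RtoC t * (v - W))%C).
  assert (Hs : Cmod s <= Cmod W / 2).
  { unfold s. eapply Rle_trans; [apply Cmod_triangle|].
    rewrite !Cmod_scal_pos by lra. nra. }
  replace (Re u + t * (Re v - Re u), Im u + t * (Im v - Im u)) with (W + s)%C
    by (unfold s; destruct u, v, W; unfold Re, Im, Cplus, Cminus, Cmult, Copp, RtoC; simpl;
        f_equal; ring).
  pose proof (Cmod_le_add_Cmod_sub W (W + s)%C) as Htri.
  replace (W - (W + s))%C with (- s)%C in Htri by ring. rewrite Cmod_opp in Htri. lra.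
Qed.

Lemma Cpow_lipschitz_half_ball e (W u v : C) : 0 < e < 1 -> 0 < Cmod W ->
  Cmod (u - W) <= Cmod W / 2 -> Cmod (v - W) <= Cmod W / 2 -> 0 < Re u -> 0 < Re v ->
  Cmod (Defs.Cpow v e - Defs.Cpow u e) <= 4 * e * (Rpower (Cmod W) e / Cmod W) * Cmod (v - u).
Proof.
  intros He HW Hu Hv Hu0 Hv0.
  eapply Rle_trans.
  { apply (Cpow_lipschitz e (Cmod W / 2)); [auto | lra |].
    apply segment_in_half_ball; auto. }
  apply Rmult_le_compat_r; [apply Cmod_ge_0|].
  assert (Rpower (Cmod W / 2) e <= Rpower (Cmod W) e) by (apply Rle_Rpower_l; lra).
  replace (4 * e * (Rpower (Cmod W) e / Cmod W)) with (2 * e * (Rpower (Cmod W) e / (Cmod W / 2)))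
    by (field; lra).
  apply Rmult_le_compat_l; [lra|]. unfold Rdiv.
  apply Rmult_le_compat_r; [left; apply Rinv_0_lt_compat|]; lra.
Qed.

(** * Solving phi(z) = w by contraction *)

Lemma le_of_le_add_pow_half a b K : (forall n : nat, a <= b + K * (/ 2) ^ n) -> a <= b.
Proof.
  intros Hn. destruct (Rle_dec a b) as [|Hab]; auto. exfalso.
  pose proof (Rabs_pos K).
  assert (Hy : 0 < (a - b) / (Rabs K + 1)) by (apply Rdiv_lt_0_compat; lra).
  destruct (pow_lt_1_zero (/ 2) ltac:(rewrite Rabs_pos_eq; lra) _ Hy) as [N HN].
  specialize (HN N (le_n N)). specialize (Hn N).
  pose proof (pow_le (/ 2) N ltac:(lra)). pose proof (Rle_abs K).
  rewrite Rabs_pos_eq in HN by lra.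
  apply Rcomplements.Rlt_div_r in HN; [|lra].
  nra.
Qed.

Lemma Un_cv_dist_le (y : nat -> R) l n a b :
  Un_cv y l -> (forall j, Rabs (y (n + j)%nat - a) <= b) -> Rabs (l - a) <= b.
Proof.
  intros Hcv Hb. destruct (Rle_dec (Rabs (l - a)) b) as [|Hn]; auto. exfalso.
  destruct (Hcv (Rabs (l - a) - b) ltac:(lra)) as [N HN].
  specialize (HN (n + N)%nat ltac:(lia)). specialize (Hb N). unfold R_dist in HN.
  pose proof (Rabs_triang (y (n + N)%nat - a) (l - y (n + N)%nat)).
  rewrite Rabs_minus_sym in HN.
  replace (y (n + N)%nat - a + (l - y (n + N)%nat)) with (l - a) in * by ring.
  lra.
Qed.

Lemma R_geometric_limit (y : nat -> R) rho :
  (forall n j, Rabs (y (n + j)%nat - y n) <= (/ 2) ^ n * rho) ->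
  exists l, forall n, Rabs (l - y n) <= (/ 2) ^ n * rho.
Proof.
  intros Hy.
  assert (Hcauchy : Cauchy_crit y).
  { intros eps Heps.
    assert (Hrho : 0 <= rho).
    { specialize (Hy 0%nat 0%nat). pose proof (Rabs_pos (y (0 + 0)%nat - y 0%nat)).
      simpl in *. lra. }
    destruct (pow_lt_1_zero (/ 2) ltac:(rewrite Rabs_pos_eq; lra) (eps / (rho + 1)))
      as [N HN]; [apply Rdiv_lt_0_compat; lra|].
    assert (Hsmall : forall n j, (n >= N)%nat -> Rabs (y (n + j)%nat - y n) < eps).
    { intros n j Hn. eapply Rle_lt_trans; [apply Hy|].
      specialize (HN n Hn). rewrite Rabs_pos_eq in HN by (apply pow_le; lra).
      apply Rcomplements.Rlt_div_r in HN; [|lra]. pose proof (pow_le (/ 2) n ltac:(lra)). nra. }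
    exists N. intros n m Hn Hm. unfold R_dist.
    destruct (Nat.le_ge_cases n m) as [Hnm | Hnm].
    - replace m with (n + (m - n))%nat by lia. rewrite Rabs_minus_sym. apply Hsmall; lia.
    - replace n with (m + (n - m))%nat by lia. apply Hsmall; lia. }
  destruct (Rcomplete.R_complete y Hcauchy) as [l Hl].
  exists l. intros n. apply (Un_cv_dist_le y l n); auto.
Qed.

Lemma C_geometric_limit (x : nat -> C) rho :
  (forall n j, Cmod (x (n + j)%nat - x n) <= (/ 2) ^ n * rho) ->
  exists L, forall n, Cmod (L - x n) <= 2 * ((/ 2) ^ n * rho).
Proof.
  intros Hx.
  destruct (R_geometric_limit (fun n => Re (x n)) rho) as [l1 Hl1].
  { intros n j. eapply Rle_trans; [|apply Hx]. apply (re_le_Cmod (x (n + j)%nat - x n)). }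
  destruct (R_geometric_limit (fun n => Im (x n)) rho) as [l2 Hl2].
  { intros n j. eapply Rle_trans; [|apply Hx]. apply (Rabs_Im_le_Cmod (x (n + j)%nat - x n)). }
  exists (l1, l2). intros n.
  eapply Rle_trans; [apply Cmod_le_Rabs_Re_Im|].
  specialize (Hl1 n). specialize (Hl2 n). unfold Re, Im in *. simpl in *. unfold Rminus in *. lra.
Qed.

Lemma contraction_fixed_point (G : C -> C) (c0 : C) rho : 0 < rho ->
  (forall u, Cmod (u - c0) <= rho -> Cmod (G u - c0) <= rho) ->
  (forall u v, Cmod (u - c0) <= rho -> Cmod (v - c0) <= rho ->
     Cmod (G u - G v) <= / 2 * Cmod (u - v)) ->
  exists u, Cmod (u - c0) <= rho /\ G u = u.
Proof.
  intros Hrho Hmaps Hcontr.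
  set (x := fun n => Nat.iter n G c0).
  assert (Hin : forall n, Cmod (x n - c0) <= rho).
  { induction n; simpl; auto. replace (c0 - c0)%C with (RtoC 0) by ring. rewrite Cmod_0. lra. }
  assert (Hstep : forall n j, Cmod (x (n + j)%nat - x n) <= (/ 2) ^ n * rho).
  { induction n; intros j; [rewrite Rmult_1_l; apply Hin|].
    change (Cmod (G (x (n + j)%nat) - G (x n)) <= / 2 * (/ 2) ^ n * rho).
    eapply Rle_trans; [apply Hcontr; apply Hin|]. specialize (IHn j). lra. }
  destruct (C_geometric_limit x rho Hstep) as [L HL].
  assert (HLin : Cmod (L - c0) <= rho).
  { apply (le_of_le_add_pow_half _ _ (2 * rho)). intros n.
    eapply Rle_trans; [apply (Cmod_le_add_Cmod_sub _ (x n - c0)%C)|].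
    replace (L - c0 - (x n - c0))%C with (L - x n)%C by ring.
    specialize (HL n). specialize (Hin n). lra. }
  exists L. split; auto.
  assert (Hdist : Cmod (G L - L) <= 0).
  { apply (le_of_le_add_pow_half _ _ (2 * rho)). intros n.
    replace (G L - L)%C with ((G L - G (x n)) + (x (S n) - L))%C by (simpl; ring).
    eapply Rle_trans; [apply Cmod_triangle|].
    pose proof (Hcontr L (x n) HLin (Hin n)). pose proof (HL n) as HLn.
    pose proof (HL (S n)) as HLSn. rewrite <- Cmod_opp, Copp_minus_distr in HLSn.
    simpl in *. lra. }
  pose proof (Cmod_ge_0 (G L - L)).
  replace (G L) with ((G L - L) + L)%C by ring.
  rewrite (Cmod_eq_0 (G L - L)%C) by lra. ring.
Qed.

Lemma Re_sub_Cpow_ge c e tau (W : C) : 0 < c -> 0 < e < 1 -> 0 < Re W ->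
  3 * c * e * Rpower (Cmod W) e <= tau * Cmod W ->
  (1 - tau) * Re W - c * cos (e * PI / 2) * Rpower (Cmod W) e
  <= Re (W - RtoC c * Defs.Cpow W e)%C.
Proof.
  intros Hc He HW Hsmall.
  pose proof (Re_Cpow_le W e He HW).
  pose proof (Re_le_Cmod W).
  assert (3 * c * e * Rpower (Cmod W) e * (Re W / Cmod W) <= tau * Re W).
  { replace (tau * Re W) with (tau * Cmod W * (Re W / Cmod W)) by (field; lra).
    apply Rmult_le_compat_r; [apply Rdiv_le_0_compat|]; lra. }
  unfold Re in *. simpl in *. nra.
Qed.

Lemma phi_solvable_near c e rho lam (W : C) : 0 < c -> 0 < rho -> 0 <= lam <= / 2 ->
  0 < Re W -> 1 + rho < Re (W - RtoC c * Defs.Cpow W e)%C ->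
  rho + c * Rpower (Cmod W) e <= Cmod W / 2 ->
  lam * (rho + c * Rpower (Cmod W) e) <= rho ->
  (forall u v, 0 < Re u -> 0 < Re v -> Cmod (u - W) <= Cmod W / 2 -> Cmod (v - W) <= Cmod W / 2 ->
     Cmod (RtoC c * (Defs.Cpow v e - Defs.Cpow u e)) <= lam * Cmod (v - u)) ->
  exists u, 1 < Re u /\ (u + RtoC c * Defs.Cpow u e)%C = W.
Proof.
  intros Hc Hrho Hlam HW Hcenter Hradius Hmaps Hlip.
  set (N := Cmod W) in *. set (NE := Rpower N e) in *.
  set (u0 := (W - RtoC c * Defs.Cpow W e)%C) in *.
  assert (Hball : forall u, Cmod (u - u0) <= rho -> 1 < Re u /\ Cmod (u - W) <= rho + c * NE).
  { intros u Hu. pose proof (Re_ge_sub_Cmod u u0). split; [lra|].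
    eapply Rle_trans; [apply (Cmod_le_add_Cmod_sub _ (u - u0)%C)|].
    replace (u - W - (u - u0))%C with (- (RtoC c * Defs.Cpow W e))%C by (unfold u0; ring).
    rewrite Cmod_opp, Cmod_scal_pos, Cmod_Cpow by lra. fold N NE. lra. }
  assert (HWW : Cmod (W - W) <= N / 2).
  { replace (W - W)%C with (RtoC 0) by ring. rewrite Cmod_0.
    pose proof (Cmod_ge_0 W) as HN. fold N in HN. lra. }
  destruct (contraction_fixed_point (fun u => W - RtoC c * Defs.Cpow u e)%C u0 rho Hrho)
    as [u [Hu Hfix]].
  - intros u Hu. destruct (Hball u Hu) as [Hu1 HuW].
    replace (W - RtoC c * Defs.Cpow u e - u0)%C with (RtoC c * (Defs.Cpow W e - Defs.Cpow u e))%C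
      by (unfold u0; ring).
    eapply Rle_trans; [apply Hlip; auto; lra|].
    rewrite <- Cmod_opp, Copp_minus_distr.
    apply Rle_trans with (lam * (rho + c * NE)); [apply Rmult_le_compat_l|]; lra.
  - intros u v Hu Hv. destruct (Hball u Hu) as [Hu1 HuW]. destruct (Hball v Hv) as [Hv1 HvW].
    replace (W - RtoC c * Defs.Cpow u e - (W - RtoC c * Defs.Cpow v e))%C
      with (RtoC c * (Defs.Cpow v e - Defs.Cpow u e))%C by ring.
    eapply Rle_trans; [apply Hlip; lra|].
    rewrite <- (Cmod_opp (v - u)), Copp_minus_distr.
    apply Rmult_le_compat_r; [apply Cmod_ge_0 | lra].
  - exists u. split; [apply Hball, Hu|]. rewrite <- Hfix at 1. ring.
Qed.

Lemma phi_solvable_far c e rho (W : C) : 0 < c -> 0 < e < 1 -> 0 < rho -> 0 < Re W ->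
  1 + rho < Re (W - RtoC c * Defs.Cpow W e)%C ->
  rho + c * Rpower (Cmod W) e <= Cmod W / 2 ->
  4 * c * e * Rpower (Cmod W) e * (rho + c * Rpower (Cmod W) e) <= rho * Cmod W ->
  8 * c * e * Rpower (Cmod W) e <= Cmod W ->
  exists u, 1 < Re u /\ (u + RtoC c * Defs.Cpow u e)%C = W.
Proof.
  intros Hc He Hrho HW Hcenter Hradius Hmaps Hcontr.
  pose proof (Re_le_Cmod W).
  set (N := Cmod W) in *. set (NE := Rpower N e) in *.
  assert (HcNE : 0 < 4 * c * e * NE) by (repeat apply Rmult_lt_0_compat; try apply Rpower_pos; lra).
  apply (phi_solvable_near c e rho (4 * c * e * NE / N)); fold N NE; auto.
  - split; [apply Rdiv_le_0_compat | apply Rcomplements.Rle_div_l]; lra.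
  - replace (4 * c * e * NE / N * (rho + c * NE)) with (4 * c * e * NE * (rho + c * NE) / N)
      by (field; lra).
    apply Rcomplements.Rle_div_l; lra.
  - intros u v Hu Hv HuW HvW. rewrite Cmod_scal_pos by lra.
    replace (4 * c * e * NE / N * Cmod (v - u)) with (c * (4 * e * (NE / N) * Cmod (v - u)))
      by (field; lra).
    apply Rmult_le_compat_l; [lra|]. apply Cpow_lipschitz_half_ball; auto; fold N; lra.
Qed.

(* [m] is a quarter of the margin [a - c cos (e pi/2)]; the solution is sought within
   distance [m |W|^e] of [W - c W^e]. *)
Lemma phi_solvable_eventually c e a K : 0 < c -> 0 < e < 1 -> c * cos (e * PI / 2) < a ->
  Rbar_locally p_infty (fun N => forall W : C, Cmod W = N -> a * Rpower N e - K <= Re W ->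
    exists u, 1 < Re u /\ (u + RtoC c * Defs.Cpow u e)%C = W).
Proof.
  intros Hc He Ha.
  pose proof (cos_scale_half_PI_pos e He) as Hk. set (k := cos (e * PI / 2)) in *.
  set (m := (a - c * k) / 4).
  assert (Hm : 0 < m) by (unfold m; lra).
  assert (Ha4 : 4 * m < a) by (unfold m; pose proof (Rmult_lt_0_compat c k Hc Hk); lra).
  set (tau := m / a).
  assert (Htau : 0 < tau <= 1 / 4).
  { unfold tau. split; [apply Rdiv_lt_0_compat; lra|].
    apply Rcomplements.Rle_div_l; lra. }
  assert (Hce : 0 < c * e) by (apply Rmult_lt_0_compat; lra).
  pose proof (Rpower_le_linear_eventually tau (3 * c * e) e ltac:(lra) ltac:(lra)) as E1.
  pose proof (Rpower_ge_eventually ((Rabs K + 2) / m) e ltac:(lra)) as E2.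
  pose proof (Rpower_le_linear_eventually (/ 2) (m + c) e ltac:(lra) ltac:(lra)) as E3.
  pose proof (Rpower_le_linear_eventually m (4 * c * e * (m + c)) e Hm ltac:(lra)) as E4.
  pose proof (Rpower_le_linear_eventually 1 (8 * c * e) e ltac:(lra) ltac:(lra)) as E5.
  eapply filter_imp; [|exact (filter_and _ _ E1 (filter_and _ _ E2
                                (filter_and _ _ E3 (filter_and _ _ E4 E5))))].
  intros N (Hsmall & Hlarge & Hradius & Hmaps & Hcontr) W HWN HW. subst N.
  pose proof (Rpower_pos (Cmod W) e).
  set (NE := Rpower (Cmod W) e) in *.
  apply Rcomplements.Rle_div_l in Hlarge; [|lra].
  pose proof (Rabs_pos K). pose proof (Rle_abs K).
  assert (HWpos : 0 < Re W) by nra.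
  apply (phi_solvable_far c e (m * NE) W Hc He); fold NE; [nra | auto | | nra | | lra].
  - pose proof (Re_sub_Cpow_ge c e tau W Hc He HWpos ltac:(fold NE; lra)) as Hcenter.
    fold k NE in Hcenter.
    assert (Hmid : (1 - tau) * (a * NE - K) <= (1 - tau) * Re W)
      by (apply Rmult_le_compat_l; lra).
    assert (HK : (1 - tau) * K <= Rabs K) by nra.
    assert (HaNE : (1 - tau) * (a * NE) = 3 * m * NE + c * k * NE)
      by (unfold tau, m; field; lra).
    nra.
  - apply (Rmult_le_compat_r NE) in Hmaps; [|lra]. nra.
Qed.

(** * Power regions *)

(* Measured with [1 + |w|] because Stdlib's [Rpower 0 e] is [1]. *)
Definition power_region (a K e : R) (w : C) : Prop :=
  a * Rpower (1 + Cmod w) e - K <= Re w.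

Lemma U_bounds c e w : 0 < c -> 0 < e < 1 -> U c e w ->
  exists r, 1 < r /\ c * cos (e * PI / 2) * Rpower r e <= Re w /\
    Cmod w <= r + 1 + c * Rpower r e.
Proof.
  intros Hc He [z [Hz ->]]. unfold H, Defs.Re in Hz.
  set (u := (RtoC 1 + z)%C).
  assert (Hu : 0 < Re u) by (unfold u, Re; simpl; lra).
  pose proof (Re_Cpow_ge u e He Hu).
  exists (Cmod u). split; [|split].
  - pose proof (Re_le_Cmod u). unfold u, Re in *. simpl in *. lra.
  - unfold phi. fold u. unfold Re in *. simpl in *. nra.
  - unfold phi. fold u. eapply Rle_trans; [apply Cmod_triangle|].
    rewrite Cmod_scal_pos, Cmod_Cpow by lra.
    pose proof (Cmod_le_add_Cmod_sub z u) as Htri.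
    replace (z - u)%C with (- RtoC 1)%C in Htri by (unfold u; ring).
    rewrite Cmod_opp, Cmod_1 in Htri. lra.
Qed.

Lemma U_incl_power_region c e a : 0 < c -> 0 < e < 1 -> 0 <= a < c * cos (e * PI / 2) ->
  exists K, forall w, U c e w -> power_region a K e w.
Proof.
  intros Hc He Ha.
  destruct (Rpower_le_linear_add (c * cos (e * PI / 2) - a) (a * Rpower (2 + c) e) e
              ltac:(lra) ltac:(lra)) as [K HK].
  exists K. intros w Hw. unfold power_region.
  destruct (U_bounds c e w Hc He Hw) as [r [Hr [Hre Hmod]]].
  set (s := Rpower r e) in *.
  assert (Hs : 1 <= s) by (apply Rpower_ge_1; lra).
  specialize (HK s ltac:(lra)).
  assert (Hpow : Rpower (1 + Cmod w) e <= s + Rpower (2 + c) e * Rpower s e).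
  { apply Rle_trans with (Rpower (r + (2 + c) * s) e).
    - apply Rle_Rpower_l; [lra|]. pose proof (Cmod_ge_0 w). nra.
    - rewrite Rpower_mult_distr by lra. apply Rpower_subadditive; nra. }
  nra.
Qed.

Lemma germ_incl_trans A B D : germ_incl A B -> germ_incl B D -> germ_incl A D.
Proof.
  intros [R1 [HR1 H1]] [R2 [HR2 H2]]. exists (Rmax R1 R2).
  pose proof (Rmax_l R1 R2). pose proof (Rmax_r R1 R2).
  split; [lra|]. intros z Hz Hm. apply H2; [apply H1|]; auto; lra.
Qed.

Lemma incl_germ_incl (A B : C -> Prop) : (forall w, A w -> B w) -> germ_incl A B.
Proof. intros HAB. exists 1. split; [lra|]. auto. Qed.

Lemma germ_incl_of_eventually (A B : C -> Prop) :
  Rbar_locally p_infty (fun N => forall w, A w -> Cmod w = N -> B w) -> germ_incl A B.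
Proof.
  intros [M HM]. exists (Rmax M 0 + 1). pose proof (Rmax_l M 0). pose proof (Rmax_r M 0).
  split; [lra|]. intros w Hw Hm. apply (HM (Cmod w)); auto; lra.
Qed.

Lemma power_region_germ_U c e a K : 0 < c -> 0 < e < 1 -> c * cos (e * PI / 2) < a ->
  germ_incl (power_region a K e) (U c e).
Proof.
  intros Hc He Ha.
  pose proof (cos_scale_half_PI_pos e He) as Hk.
  assert (Ha0 : 0 < a) by (pose proof (Rmult_lt_0_compat c (cos (e * PI / 2)) Hc Hk); lra).
  destruct (phi_solvable_eventually c e a K Hc He Ha) as [M HM].
  exists (Rmax M 0 + 1). pose proof (Rmax_l M 0). pose proof (Rmax_r M 0).
  split; [lra|]. intros w Hw Hm.
  set (W := (RtoC 1 + w)%C).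
  assert (HWup : Cmod W <= 1 + Cmod w)
    by (unfold W; eapply Rle_trans; [apply Cmod_triangle|]; rewrite Cmod_1; lra).
  assert (HWlow : Cmod w - 1 <= Cmod W).
  { pose proof (Cmod_le_add_Cmod_sub w W) as Htri.
    replace (w - W)%C with (- RtoC 1)%C in Htri by (unfold W; ring).
    rewrite Cmod_opp, Cmod_1 in Htri. lra. }
  destruct (HM (Cmod W) ltac:(lra) W eq_refl) as [u [Hu Hsol]].
  { unfold power_region in Hw.
    assert (Rpower (Cmod W) e <= Rpower (1 + Cmod w) e) by (apply Rle_Rpower_l; lra).
    unfold W, Re in *. simpl in *. nra. }
  exists (u - RtoC 1)%C. split.
  - unfold Defs.H, Defs.Re, Re in *. simpl. lra.
  - unfold phi. replace (RtoC 1 + (u - RtoC 1))%C with u by ring.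
    replace w with (W - RtoC 1)%C by (unfold W; ring). rewrite <- Hsol. ring.
Qed.

Lemma T_incl_power_region (A : C -> Prop) a K e delta : 0 <= a -> 0 < e < 1 -> 0 < delta ->
  (forall w, A w -> power_region a K e w) ->
  forall w, T A delta w -> power_region a (K + delta + a * Rpower delta e) e w.
Proof.
  intros Ha He Hd HA w [b [Hb Hwb]]. specialize (HA b Hb). unfold power_region in *.
  pose proof (Re_ge_sub_Cmod w b). pose proof (Cmod_le_add_Cmod_sub w b).
  pose proof (Cmod_ge_0 b). pose proof (Cmod_ge_0 w).
  assert (Rpower (1 + Cmod w) e <= Rpower (1 + Cmod b) e + Rpower delta e).
  { eapply Rle_trans; [apply Rle_Rpower_l with (b := 1 + Cmod b + delta); lra|].
    apply Rpower_subadditive; lra. }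
  nra.
Qed.

Lemma msum_incl_power_region (A : C -> Prop) a K e : 0 <= a -> 0 < e < 1 ->
  (forall w, A w -> power_region a K e w) ->
  forall w, msum A A w -> power_region a (2 * K) e w.
Proof.
  intros Ha He HA w [u [v [Hu [Hv ->]]]].
  specialize (HA u Hu) as Hu'. specialize (HA v Hv) as Hv'. unfold power_region in *.
  pose proof (Cmod_triangle u v). pose proof (Cmod_ge_0 u). pose proof (Cmod_ge_0 v).
  pose proof (Cmod_ge_0 (u + v)%C).
  assert (Rpower (1 + Cmod (u + v)) e <= Rpower (1 + Cmod u) e + Rpower (1 + Cmod v) e).
  { eapply Rle_trans; [apply Rle_Rpower_l with (b := (1 + Cmod u) + (1 + Cmod v)); lra|].
    apply Rpower_subadditive; lra. }
  unfold Re in *. simpl. nra.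
Qed.

Lemma scale_incl_power_region (A : C -> Prop) a K e nu : 0 <= a -> 0 < e < 1 -> 0 < nu ->
  (forall w, A w -> power_region a K e w) ->
  forall w, scale nu A w ->
    power_region (Rpower nu (1 - e) * a) (nu * K + Rpower nu (1 - e) * a) e w.
Proof.
  intros Ha He Hnu HA w [b [Hb ->]]. specialize (HA b Hb). unfold power_region in *.
  rewrite Cmod_scal_pos by lra. pose proof (Cmod_ge_0 b).
  assert (Hsplit : Rpower nu (1 - e) * Rpower nu e = nu).
  { rewrite <- Rpower_plus. replace (1 - e + e) with 1 by ring. now apply Rpower_1. }
  assert (Hpow : Rpower (1 + nu * Cmod b) e <= 1 + Rpower nu e * Rpower (1 + Cmod b) e).
  { eapply Rle_trans; [apply Rle_Rpower_l with (b := 1 + nu * (1 + Cmod b)); nra|].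
    rewrite Rpower_mult_distr by lra.
    pose proof (Rpower_subadditive 1 (nu * (1 + Cmod b)) e) as Hsub.
    rewrite Rpower_base_1 in Hsub. apply Hsub; nra. }
  pose proof (Rpower_pos nu (1 - e)).
  assert (Rpower nu (1 - e) * a * Rpower (1 + nu * Cmod b) e
          <= Rpower nu (1 - e) * a + nu * a * Rpower (1 + Cmod b) e).
  { apply Rmult_le_compat_l with (r := Rpower nu (1 - e) * a) in Hpow; [|nra].
    assert (nu * a * Rpower (1 + Cmod b) e
            = Rpower nu (1 - e) * Rpower nu e * a * Rpower (1 + Cmod b) e)
      by (rewrite Hsplit; reflexivity).
    lra. }
  assert (nu * (a * Rpower (1 + Cmod b) e - K) <= nu * Re b) by (apply Rmult_le_compat_l; lra).
  replace (Re (RtoC nu * b)%C) with (nu * Re b) by (unfold Re; simpl; ring).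
  lra.
Qed.

Lemma power_region_exponent_germ a K e a' K' e' : 0 < a -> 0 <= e' < e ->
  germ_incl (power_region a K e) (power_region a' K' e').
Proof.
  intros Ha He. apply germ_incl_of_eventually.
  pose proof (Rpower_le_Rpower_eventually (a / 2) a' e' e ltac:(lra) He) as E1.
  pose proof (Rpower_ge_eventually (2 * (K - K') / a) e ltac:(lra)) as E2.
  destruct (filter_and _ _ E1 E2) as [M HM].
  exists M. intros N HN w Hw <-. unfold power_region in *.
  destruct (HM (1 + Cmod w) ltac:(lra)) as [Hpow HK].
  apply Rcomplements.Rle_div_l in HK; lra.
Qed.

Lemma Rabs_Arg_le z : Rabs (Arg z) <= 2 * PI.
Proof.
  pose proof PI_RGT_0. pose proof (atan_bound (Defs.Im z / Defs.Re z)).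
  unfold Arg. apply Rabs_le.
  destruct (Rlt_dec 0 (Defs.Re z)); [lra|].
  destruct (Rlt_dec (Defs.Re z) 0); [destruct (Rle_dec 0 (Defs.Im z)); lra|].
  destruct (Rlt_dec 0 (Defs.Im z)); [lra|].
  destruct (Rlt_dec (Defs.Im z) 0); lra.
Qed.

(* [|Im (log z)| <= 2 pi < 8], whence [1 + |log z| <= Re (log z) + 9]. *)
Lemma log_image_incl_power_region (B : C -> Prop) a e : 0 < e < 1 ->
  exists K, forall w, inter (log_image B) (H 0) w -> power_region a K e w.
Proof.
  intros He.
  destruct (Rpower_le_linear_add 1 (Rabs a) e ltac:(lra) ltac:(lra)) as [K HK].
  exists (K + Rabs a * Rpower 9 e). intros w [[z [_ ->]] Hw]. unfold H, Defs.Re in Hw.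
  unfold power_region. set (x := Re (Clog z)) in *. change (fst (Clog z)) with x in Hw.
  assert (Hmod : 1 + Cmod (Clog z) <= x + 9).
  { eapply Rle_trans; [apply Rplus_le_compat_l, Cmod_le_Rabs_Re_Im|].
    pose proof (Rabs_Arg_le z). pose proof PI_4. fold x.
    rewrite Rabs_pos_eq by lra. unfold Im. simpl. lra. }
  assert (Rpower (1 + Cmod (Clog z)) e <= Rpower x e + Rpower 9 e).
  { eapply Rle_trans; [apply Rle_Rpower_l with (b := x + 9)|apply Rpower_subadditive];
      pose proof (Cmod_ge_0 (Clog z)); lra. }
  specialize (HK x Hw). pose proof (Rabs_pos a). pose proof (Rle_abs a).
  pose proof (Rpower_pos (1 + Cmod (Clog z)) e). nra.
Qed.

Lemma T_U_germ_incl_exponent c e d e' delta : 0 < c -> 0 < e < 1 -> 0 < d -> e < e' < 1 ->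
  0 < delta -> germ_incl (T (U d e') delta) (U c e).
Proof.
  intros Hc He Hd He' Hdelta.
  pose proof (cos_scale_half_PI_pos e' ltac:(lra)) as Hk'.
  pose proof (cos_scale_half_PI_pos e He) as Hk.
  pose proof (Rmult_lt_0_compat _ _ Hd Hk') as Hdk'.
  set (a := d * cos (e' * PI / 2) / 2).
  destruct (U_incl_power_region d e' a Hd ltac:(lra) ltac:(unfold a; lra)) as [K HK].
  eapply germ_incl_trans.
  { apply incl_germ_incl, (T_incl_power_region _ a K e' delta); auto; unfold a; lra. }
  eapply germ_incl_trans.
  { apply (power_region_exponent_germ _ _ _ (2 * c * cos (e * PI / 2)) 0 e); unfold a; lra. }
  apply power_region_germ_U; auto. pose proof (Rmult_lt_0_compat _ _ Hc Hk). lra.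
Qed.

Lemma T_U_germ_incl c e d delta : 0 < c -> 0 < e < 1 -> c < d -> 0 < delta ->
  germ_incl (T (U d e) delta) (U c e).
Proof.
  intros Hc He Hcd Hdelta.
  pose proof (cos_scale_half_PI_pos e He) as Hk. set (k := cos (e * PI / 2)) in *.
  set (a := (c + d) / 2 * k).
  assert (Hak : c * k < a < d * k) by (unfold a; split; nra).
  destruct (U_incl_power_region d e a ltac:(lra) He ltac:(fold k; nra)) as [K HK].
  eapply germ_incl_trans.
  { apply incl_germ_incl, (T_incl_power_region _ a K e delta); auto; nra. }
  apply power_region_germ_U; auto. fold k. lra.
Qed.

Lemma scale_U_germ_incl c c' e nu : 0 < c -> 0 < c' -> 0 < e < 1 -> 0 < nu ->
  c' < Rpower nu (1 - e) * c -> germ_incl (scale nu (U c e)) (U c' e).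
Proof.
  intros Hc Hc' He Hnu Hlt.
  pose proof (cos_scale_half_PI_pos e He) as Hk. set (k := cos (e * PI / 2)) in *.
  pose proof (Rpower_pos nu (1 - e)) as HP. set (P := Rpower nu (1 - e)) in *.
  set (a := (c' * k / P + c * k) / 2).
  assert (HcP : c' * k / P < c * k).
  { apply Rcomplements.Rlt_div_l; [lra|]. nra. }
  assert (Ha : 0 <= a < c * k).
  { unfold a. pose proof (Rmult_lt_0_compat _ _ Hc' Hk).
    assert (0 < c' * k / P) by (apply Rdiv_lt_0_compat; lra). lra. }
  destruct (U_incl_power_region c e a Hc He Ha) as [K HK].
  eapply germ_incl_trans.
  { apply incl_germ_incl, (scale_incl_power_region _ a K e nu); auto; lra. }
  apply power_region_germ_U; auto. fold k P.
  replace (P * a) with ((c' * k + c * k * P) / 2) by (unfold a; field; lra). nra.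
Qed.

Lemma scale_one (A : C -> Prop) w : scale 1 A w -> A w.
Proof. intros [z [Hz ->]]. now replace (RtoC 1 * z)%C with z by ring. Qed.

Lemma scale_U_germ_incl_le_1 c e nu : 0 < c -> 0 < e < 1 -> 0 < nu -> nu <= 1 ->
  germ_incl (scale nu (U c e)) (U (nu * c) e).
Proof.
  intros Hc He Hnu Hnu1. destruct (Req_dec nu 1) as [-> | Hne].
  - rewrite Rmult_1_l. apply incl_germ_incl, scale_one.
  - apply scale_U_germ_incl; auto; [nra|].
    assert (Hsplit : Rpower nu (1 - e) * Rpower nu e = nu).
    { rewrite <- Rpower_plus. replace (1 - e + e) with 1 by ring. now apply Rpower_1. }
    assert (Rpower nu e < 1) by (rewrite <- (Rpower_base_1 e); apply Rlt_Rpower_l; lra).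
    pose proof (Rpower_pos nu (1 - e)).
    assert (nu < Rpower nu (1 - e)) by nra. nra.
Qed.

Lemma scale_U_germ_incl_ge_1 c e nu : 0 < c -> 0 < e < 1 -> 1 <= nu ->
  germ_incl (scale nu (U c e)) (U c e).
Proof.
  intros Hc He Hnu1. destruct (Req_dec nu 1) as [-> | Hne].
  - apply incl_germ_incl, scale_one.
  - apply scale_U_germ_incl; auto; [lra|].
    pose proof (Rpower_lt nu 0 (1 - e) ltac:(lra) ltac:(lra)) as Hlt.
    rewrite Rpower_O in Hlt by lra.
    nra.
Qed.

Lemma msum_U_germ_incl c e : 0 < c -> 0 < e < 1 ->
  germ_incl (msum (U c e) (U c e)) (U (c / 2) e).
Proof.
  intros Hc He.
  pose proof (cos_scale_half_PI_pos e He) as Hk. set (k := cos (e * PI / 2)) in *.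
  pose proof (Rmult_lt_0_compat c k Hc Hk).
  destruct (U_incl_power_region c e (3 / 4 * (c * k)) Hc He ltac:(fold k; lra)) as [K HK].
  eapply germ_incl_trans.
  { apply incl_germ_incl, (msum_incl_power_region _ (3 / 4 * (c * k)) K e); auto; lra. }
  apply power_region_germ_U; [lra | auto | fold k; lra].
Qed.

Lemma log_image_germ_incl (B A : C -> Prop) b : 0 <= b -> standard_power_domain A ->
  germ_incl (inter (log_image B) (H b)) (inter A (H b)).
Proof.
  intros Hb [c [e [Hc [He HA]]]].
  pose proof (cos_scale_half_PI_pos e He) as Hk.
  destruct (log_image_incl_power_region B (2 * c * cos (e * PI / 2)) e He) as [K HK].
  destruct (power_region_germ_U c e (2 * c * cos (e * PI / 2)) K Hc He) as [R0 [HR0 HU]].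
  { pose proof (Rmult_lt_0_compat c _ Hc Hk). lra. }
  exists R0. split; auto. intros w [Hw Hwb] Hm. split; auto.
  apply HA, HU; auto. apply HK. split; auto. unfold H in *. lra.
Qed.

Theorem lemma3p2 (c eps : R) (hc : 0 < c) (heps : 0 < eps < 1) :
  (* (1) *)
  (forall (d eps' delta : R), 0 < d -> eps < eps' < 1 -> 0 < delta ->
     germ_incl (T (U d eps') delta) (U c eps)) /\
  (* (2) *)
  (forall (d delta : R), c < d -> 0 < delta ->
     germ_incl (T (U d eps) delta) (U c eps)) /\
  (* (3) *)
  (forall nu : R, 0 < nu ->
     (nu <= 1 -> germ_incl (scale nu (U c eps)) (U (nu * c) eps)) /\
     (1 <= nu -> germ_incl (scale nu (U c eps)) (U c eps))) /\
  (* (4) *)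
  germ_incl (msum (U c eps) (U c eps)) (U (c / 2) eps) /\
  (* (5) *)
  (forall A : C -> Prop, standard_power_domain A ->
     exists a : R, 0 < a /\
       germ_incl (inter (log_image (U c eps)) (H a)) (inter A (H a))).
Proof.
  split; [intros; now apply T_U_germ_incl_exponent|].
  split; [intros; now apply T_U_germ_incl|].
  split; [intros nu Hnu; split; intros;
          [now apply scale_U_germ_incl_le_1 | now apply scale_U_germ_incl_ge_1]|].
  split; [now apply msum_U_germ_incl|].
  intros A HA. exists 1. split; [lra|]. apply log_image_germ_incl; auto; lra.
Qed.
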